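(* Let $\mu_1$ be an LTI probability measure on $\{0,1\}^{\{0,1\}}$ and set $c_0=\mu_1(00)$, $c_1=\mu_1(11)$, $c_2=\mu_1(01)+\mu_1(10)$. If $L\ge2$ is even, $\mu_1$ has an extension to a translation invariant probability measure on $Y_L=\{0,1\}^{\mathbb{Z}_L}$. If $L\ge3$ is odd, $\mu_1$ has such an extension if and only if $c_2\le1-1/L$.
   Context: $\mathbb{Z}_L$ is the cycle of $L$ sites with translations mod $L$; an extension to $Y_L$ is a rotation-invariant probability measure on $Y_L$ whose marginal on sites $0,1$ is $\mu_1$. For $k=1$, LTI means $\mu_1(01)=\mu_1(10)$. *)

From HB Require Import structures.
From mathcomp Require Import all_boot all_order all_algebra.
Set Implicit Arguments. Unset Strict Implicit. Unset Printing Implicit Defensive.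
Import Order.TTheory GRing.Theory Num.Theory.
Local Open Scope ring_scope.

Definition config (L : nat) := {ffun 'I_L -> bool}.

Definition site_val (L : nat) (x : config L) (k : nat) : bool :=
  [exists i : 'I_L, (val i == k %% L)%N && x i].

Definition shift (L : nat) (x : config L) : config L :=
  [ffun i : 'I_L => site_val x i.+1].

Definition prob2 (R : realFieldType) (mu1 : bool -> bool -> R) : Prop :=
  (forall a b, 0 <= mu1 a b) /\ mu1 false false + mu1 false true + mu1 true false + mu1 true true = 1.

(* LTI for k = 1: mu1(01) = mu1(10). *)
Definition LTI2 (R : realFieldType) (mu1 : bool -> bool -> R) : Prop :=
  mu1 false true = mu1 true false.

Definition is_extension (R : realFieldType) (L : nat) (mu1 : bool -> bool -> R)
    (nu : config L -> R) : Prop :=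
  [/\ forall x, 0 <= nu x,
      \sum_(x : config L) nu x = 1,
      forall x, nu (shift x) = nu x &
      forall a b, \sum_(x : config L | (site_val x 0 == a) && (site_val x 1 == b)) nu x
                  = mu1 a b].

Definition has_extension (R : realFieldType) (L : nat) (mu1 : bool -> bool -> R) : Prop :=
  exists nu : config L -> R, @is_extension R L mu1 nu.

From HB Require Import structures.
From mathcomp Require Import all_boot all_order all_algebra ring lra zify.
Import Order.TTheory GRing.Theory Num.Theory.
Local Open Scope ring_scope.
Set Implicit Arguments. Unset Strict Implicit.

(* Rotation invariance gives every bond (x_k, x_(k+1)) of the cycle the law mu1, so the
   expected number of disagreeing bonds is L c2.  Around a cycle a configuration
   changes value an even number of times, so for odd L there are at most L - 1
   disagreeing bonds, whence c2 <= 1 - 1/L.  Conversely, the uniform measure on the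
   rotation orbit of a configuration y is invariant and its two-site marginal is the
   bond statistics of y divided by L.  Mixing the orbits of the two constant
   configurations and of the alternating ones realises mu1; for odd L an alternating
   configuration has one equal bond, and the mixture weights can be chosen
   nonnegative exactly when c2 <= 1 - 1/L. *)


Lemma big_nat_rotl (V : zmodType) n (F : nat -> V) :
  F n = F 0%N -> \sum_(0 <= k < n) F k.+1 = \sum_(0 <= k < n) F k.
Proof.
move=> Fn; apply: (addrI (F 0%N)).
by rewrite -big_nat_recl // big_nat_recr //= Fn addrC.
Qed.

Lemma odd_sum_changes (s : nat -> bool) n :
  odd (\sum_(0 <= k < n) (s k != s k.+1)) = (s 0%N != s n).
Proof.
elim: n => [|n IHn]; first by rewrite big_geq // eqxx.
by rewrite big_nat_recr //= oddD IHn; case: (s 0%N); case: (s n); case: (s n.+1).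
Qed.

Lemma sum_odd_double (F : bool -> nat) m :
  (\sum_(0 <= k < m.*2) F (odd k) = (F false + F true) * m)%N.
Proof.
elim: m => [|m IHm]; first by rewrite muln0 big_geq.
rewrite doubleS !big_nat_recr //= IHm odd_double /=.
by rewrite mulnS; lia.
Qed.

Lemma sum_indicator (R : numDomainType) (T : finType) (P : pred T) (z : T) :
  \sum_(x | P x) ((z == x)%:R : R) = (P z)%:R.
Proof.
rewrite big_mkcond (bigD1 z) //= eqxx big1 => [|x zx].
  by case: (P z); rewrite /= ?addr0.
by rewrite eq_sym (negbTE zx); case: (P x).
Qed.

Section Cycle.
Variable L : nat.
Hypothesis L_gt0 : (0 < L)%N.
Implicit Types x y : config L.

Lemma site_valE x k : site_val x k = x (Ordinal (ltn_pmod k L_gt0)).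
Proof.
apply/existsP/idP => [[i /andP [/eqP Hi Hx]]|Hx].
  by have -> : Ordinal (ltn_pmod k L_gt0) = i by apply: val_inj; rewrite /= Hi.
by exists (Ordinal (ltn_pmod k L_gt0)); rewrite /= eqxx Hx.
Qed.

Lemma site_val_mod x k : site_val x (k %% L) = site_val x k.
Proof. by rewrite /site_val; under eq_existsb do rewrite modn_mod. Qed.

Lemma site_val_ord x (i : 'I_L) : site_val x i = x i.
Proof. by rewrite site_valE; congr (x _); apply: val_inj; apply: modn_small. Qed.

Lemma site_valDL x k : site_val x (k + L) = site_val x k.
Proof. by rewrite -site_val_mod modnDr site_val_mod. Qed.

Lemma config_ext x y : (forall k, site_val x k = site_val y k) -> x = y.
Proof. by move=> xy; apply/ffunP => i; rewrite -!site_val_ord xy. Qed.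

Lemma site_val_shift x k : site_val (shift x) k = site_val x k.+1.
Proof. by rewrite site_valE ffunE /= -site_val_mod -addn1 modnDml site_val_mod addn1. Qed.

Lemma shift_inj : injective (@shift L).
Proof.
move=> x y xy; apply: config_ext => k.
rewrite -(site_valDL x) -(site_valDL y).
have -> : (k + L = (k + L.-1).+1)%N by rewrite -addnS prednK.
by rewrite -!site_val_shift xy.
Qed.

Lemma bond_changes_lt_odd x : odd L ->
  (\sum_(0 <= k < L) (site_val x k != site_val x k.+1) < L)%N.
Proof.
move=> oddL; set D := (\sum_(_ <= _ < _) _)%N.
have D_even : ~~ odd D by rewrite odd_sum_changes -(site_valDL x 0) eqxx.
have : (D <= L)%N.
  by rewrite -[X in (_ <= X)%N](subn0 L) -[X in (_ <= X)%N]muln1 -sum_nat_const_nat;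
     apply: leq_sum => k _; case: (_ != _).
by rewrite leq_eqVlt => /orP [/eqP DL|//]; rewrite DL oddL in D_even.
Qed.

Definition rot k y : config L := [ffun i : 'I_L => site_val y (i + k)].

Lemma site_val_rot k y j : site_val (rot k y) j = site_val y (j + k).
Proof. by rewrite site_valE ffunE /= -site_val_mod modnDml site_val_mod. Qed.

Lemma shift_rot k y : shift (rot k y) = rot k.+1 y.
Proof. by apply: config_ext => j; rewrite site_val_shift !site_val_rot addSnnS. Qed.

Lemma rot_cycle y : rot L y = rot 0 y.
Proof. by apply: config_ext => j; rewrite !site_val_rot site_valDL addn0. Qed.

Definition bond_count y (a b : bool) : nat :=
  \sum_(0 <= k < L) ((site_val y k == a) && (site_val y k.+1 == b)).

Definition const_config (c : bool) : config L := [ffun=> c].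

Definition alt_config (c : bool) : config L := [ffun i : 'I_L => odd i (+) c].

Lemma site_val_alt c k : site_val (alt_config c) k = odd (k %% L) (+) c.
Proof. by rewrite site_valE ffunE. Qed.

Lemma bond_count_const (c a b : bool) :
  bond_count (const_config c) a b = (((c == a) && (c == b)) * L)%N.
Proof.
rewrite /bond_count; under eq_bigr do rewrite !site_valE !ffunE.
by rewrite sum_nat_const_nat subn0 mulnC.
Qed.

Lemma bond_count_alt_even (c a b : bool) m : L = m.*2 ->
  bond_count (alt_config c) a b = ((a != b) * m)%N.
Proof.
move=> Lm; have Leven : odd L = false by rewrite Lm odd_double.
pose F o : nat := (o (+) c == a) && (~~ o (+) c == b).
rewrite /bond_count (eq_bigr (fun k => F (odd k))) => [|k _]; last first.
  by rewrite !site_val_alt !odd_mod.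
by rewrite Lm sum_odd_double /F {F}; case: a; case: b; case: c.
Qed.

Lemma bond_count_alt_odd (c a b : bool) m : L = m.*2.+1 ->
  bond_count (alt_config c) a b = ((a != b) * m + ((a == c) && (b == c)))%N.
Proof.
move=> Lm; pose F o : nat := (o (+) c == a) && (~~ o (+) c == b).
rewrite /bond_count {1}Lm big_nat_recr //=.
rewrite (eq_big_nat _ _ (F2 := fun k => F (odd k))) => [|k /andP [_ k_lt]]; last first.
  by rewrite !site_val_alt !modn_small // Lm ltnS // ltnW.
rewrite sum_odd_double !site_val_alt modn_small ?Lm // modnn odd_double /F {F}.
by case: a; case: b; case: c.
Qed.

Section OrbitMeasure.
Variable R : realFieldType.

Definition marginal (nu : config L -> R) (a b : bool) : R :=
  \sum_(x | (site_val x 0 == a) && (site_val x 1 == b)) nu x.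

Definition orbit_meas y x : R := L%:R^-1 * \sum_(0 <= k < L) (rot k y == x)%:R.

Lemma natrL_gt0 : (0 : R) < L%:R.
Proof. by rewrite ltr0n. Qed.

Lemma natrL_neq0 : (L%:R : R) != 0.
Proof. by rewrite gt_eqF ?natrL_gt0. Qed.

Lemma orbit_meas_ge0 y x : 0 <= orbit_meas y x.
Proof. by rewrite mulr_ge0 ?invr_ge0 ?ler0n ?sumr_ge0. Qed.

Lemma orbit_meas_sum y : \sum_x orbit_meas y x = 1.
Proof.
rewrite -mulr_sumr exchange_big /=.
under eq_bigr do rewrite (sum_indicator _ xpredT).
by rewrite sumr_const_nat subn0 mulr1n mulVf ?natrL_neq0.
Qed.

Lemma orbit_meas_shift y x : orbit_meas y (shift x) = orbit_meas y x.
Proof.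
rewrite /orbit_meas -(@big_nat_rotl _ _ (fun k => (rot k y == shift x)%:R : R)) ?rot_cycle //.
by under eq_bigr do rewrite -shift_rot (inj_eq shift_inj).
Qed.

Lemma marginal_orbit_meas y a b :
  marginal (orbit_meas y) a b = (bond_count y a b)%:R / L%:R.
Proof.
rewrite /marginal -mulr_sumr exchange_big /= mulrC natr_sum; congr (_ * _).
by apply: eq_bigr => k _; rewrite sum_indicator !site_val_rot add0n add1n.
Qed.

(* [s] lists the weights and configurations of a convex combination of orbit measures. *)
Lemma orbit_mixture_extension (mu1 : bool -> bool -> R) (s : seq (R * config L)) :
  all (fun p => 0 <= p.1) s -> \sum_(p <- s) p.1 = 1 ->
  (forall a b, \sum_(p <- s) p.1 * (bond_count p.2 a b)%:R = mu1 a b *+ L) ->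
  has_extension L mu1.
Proof.
move=> /allP w_ge0 w_sum w_bonds.
exists (fun x => \sum_(p <- s) p.1 * orbit_meas p.2 x); split.
- move=> x; rewrite big_seq; apply: sumr_ge0 => p ps.
  by apply: mulr_ge0; [exact: w_ge0 | exact: orbit_meas_ge0].
- rewrite exchange_big /=; under eq_bigr do rewrite -mulr_sumr orbit_meas_sum mulr1.
  exact: w_sum.
- by move=> x; under eq_bigr do rewrite orbit_meas_shift.
- move=> a b; rewrite exchange_big /=.
  under eq_bigr do rewrite -mulr_sumr -/(marginal _ a b) marginal_orbit_meas mulrA.
  by rewrite -mulr_suml w_bonds -(mulr_natr (mu1 a b)) mulfK ?natrL_neq0.
Qed.

End OrbitMeasure.

Section Necessity.
Variables (R : realFieldType) (mu1 : bool -> bool -> R) (nu : config L -> R).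
Hypothesis nu_ext : is_extension mu1 nu.

Lemma expectation_shift (g : config L -> R) :
  \sum_x nu x * g (shift x) = \sum_x nu x * g x.
Proof.
case: nu_ext => _ _ nu_shift _.
by rewrite [RHS](reindex_inj shift_inj); apply: eq_bigr => x _; rewrite nu_shift.
Qed.

Lemma expectation_bond_change k :
  \sum_x nu x * (site_val x k != site_val x k.+1)%:R = mu1 false true + mu1 true false.
Proof.
elim: k => [|k IHk].
  case: nu_ext => _ _ _ nu_marg.
  rewrite -!nu_marg [in RHS]big_mkcond [X in _ + X]big_mkcond -big_split /=.
  by apply: eq_bigr => x _; case: (site_val x 0); case: (site_val x 1);
     rewrite /= ?mulr1 ?mulr0 ?addr0 ?add0r.
rewrite -IHk -(expectation_shift (fun x => (site_val x k != site_val x k.+1)%:R)).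
by under [RHS]eq_bigr do rewrite !site_val_shift.
Qed.

Lemma extension_disagreement_le : odd L ->
  mu1 false true + mu1 true false <= 1 - L%:R^-1.
Proof.
move=> oddL; case: nu_ext => nu_ge0 nu_sum _ _; set c2 := _ + _.
pose changes x := (\sum_(0 <= k < L) (site_val x k != site_val x k.+1))%N.
have mean_changes : \sum_x nu x * (changes x)%:R = c2 *+ L.
  under eq_bigr do rewrite natr_sum mulr_sumr.
  rewrite exchange_big /=; under eq_bigr do rewrite expectation_bond_change.
  by rewrite sumr_const_nat subn0.
have bound : c2 *+ L <= (L.-1)%:R.
  rewrite -mean_changes (le_trans _ (_ : \sum_x nu x * (L.-1)%:R <= _)) //;
    last by rewrite -mulr_suml nu_sum mul1r.
  apply: ler_sum => x _; apply: ler_wpM2l => //; rewrite ler_nat -ltnS prednK //.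
  exact: bond_changes_lt_odd.
rewrite -(ler_pM2r (natrL_gt0 R)) mulrBl mul1r mulVf ?natrL_neq0 //.
rewrite mulr_natr (le_trans bound) //.
by rewrite -{2}(prednK L_gt0) -natr1 addrK.
Qed.
End Necessity.

Section Sufficiency.
Variables (R : realFieldType) (mu1 : bool -> bool -> R).
Hypotheses (mu1_prob : prob2 mu1) (mu1_lti : LTI2 mu1).

Lemma extension_even m : L = m.*2 -> has_extension L mu1.
Proof.
move=> Lm; case: mu1_prob => mu1_ge0 mu1_sum.
apply: (@orbit_mixture_extension _ mu1
  [:: (mu1 false false, const_config false); (mu1 true true, const_config true);
      (mu1 false true + mu1 true false, alt_config false)]).
- by rewrite /= !mu1_ge0 addr_ge0.
- by rewrite !big_cons big_nil /= -[RHS]mu1_sum; ring.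
- move=> a b; rewrite !big_cons big_nil /= !bond_count_const (bond_count_alt_even _ _ _ Lm).
  rewrite -mulr_natr Lm -muln2.
  by case: a; case: b; rewrite /= ?natrM -?mu1_lti; ring.
Qed.

Lemma extension_odd_split m (T S : R) : L = m.*2.+1 ->
  0 <= T -> 0 <= S -> T <= mu1 false false -> S <= mu1 true true ->
  m%:R * (T + S) = mu1 false true -> has_extension L mu1.
Proof.
move=> Lm T_ge0 S_ge0 T_le S_le TS_bonds; case: mu1_prob => mu1_ge0 mu1_sum.
have LE : (L%:R : R) = m%:R * 2 + 1 by rewrite Lm -muln2 -addn1 natrD natrM.
apply: (@orbit_mixture_extension _ mu1
  [:: (mu1 false false - T, const_config false); (mu1 true true - S, const_config true);
      (L%:R * T, alt_config false); (L%:R * S, alt_config true)]).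
- by rewrite /= !subr_ge0 T_le S_le !mulr_ge0 ?ler0n.
- by rewrite !big_cons big_nil /= -[RHS]mu1_sum LE -mu1_lti -TS_bonds; ring.
- move=> a b; rewrite !big_cons big_nil /= !bond_count_const !(bond_count_alt_odd _ _ _ Lm).
  rewrite -mulr_natr.
  by case: a; case: b; rewrite /= ?natrD ?natrM -?mu1_lti -?TS_bonds; ring.
Qed.

Lemma extension_odd m : L = m.*2.+1 -> (0 < m)%N ->
  mu1 false true + mu1 true false <= 1 - L%:R^-1 -> has_extension L mu1.
Proof.
move=> Lm m_gt0 c2_le; case: mu1_prob => mu1_ge0 mu1_sum.
rewrite -mu1_lti in c2_le mu1_sum; set d := mu1 false true in c2_le mu1_sum *.
have m_gt0R : (0 : R) < m%:R by rewrite ltr0n.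
have LE : (L%:R : R) = m%:R * 2 + 1 by rewrite Lm -muln2 -addn1 natrD natrM.
have d_L_le : (d + d) * L%:R <= L%:R - 1.
  by move: c2_le; rewrite -(ler_pM2r (natrL_gt0 R)) mulrBl mul1r mulVf ?natrL_neq0.
have dm_le : d / m%:R <= mu1 false false + mu1 true true.
  have -> : mu1 false false + mu1 true true = 1 - (d + d) by lra.
  by rewrite ler_pdivrMr //; rewrite LE in d_L_le; lra.
have dm_K : m%:R * (d / m%:R) = d by rewrite mulrC divfK ?gt_eqF.
have [dm_le_c0|c0_lt_dm] := leP (d / m%:R) (mu1 false false).
- apply: (@extension_odd_split m (d / m%:R) 0) => //.
  + exact: divr_ge0 (mu1_ge0 _ _) (ltW m_gt0R).
  + by rewrite addr0 dm_K.
- apply: (@extension_odd_split m (mu1 false false) (d / m%:R - mu1 false false)) => //.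
  + by rewrite subr_ge0 ltW.
  + by rewrite lerBlDr addrC.
  + by rewrite addrC subrK dm_K.
Qed.
End Sufficiency.
End Cycle.

Theorem mainTheorem5 (R : realFieldType) (mu1 : bool -> bool -> R)
    (Hprob : prob2 mu1) (Hlti : LTI2 mu1) :
  (forall L : nat, (2 <= L)%N -> ~~ odd L -> @has_extension R L mu1) /\
  (forall L : nat, (3 <= L)%N -> odd L ->
     (@has_extension R L mu1 <->
      mu1 false true + mu1 true false <= 1 - (L%:R)^-1)).
Proof.
split=> [L L_ge2 L_even | L L_ge3 L_odd].
  have L_gt0 : (0 < L)%N by apply: leq_trans L_ge2.
  apply: (extension_even L_gt0 Hprob Hlti (m := L./2)).
  by rewrite -{1}(odd_double_half L) (negbTE L_even).
have L_gt0 : (0 < L)%N by apply: leq_trans L_ge3.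
have Lm : L = (L./2).*2.+1 by rewrite -{1}(odd_double_half L) L_odd.
split=> [[nu nu_ext] | c2_le].
  exact: extension_disagreement_le L_gt0 _ _ _ nu_ext L_odd.
apply: (extension_odd L_gt0 Hprob Hlti Lm _ c2_le).
by move: L_ge3; rewrite Lm; case: (L./2).
Qed.
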